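(* Let $G$ be an infinite group and $A\subseteq G$. Then: (i) for $n\in\mathbb{N}$, $A$ is $n$-thin if and only if $|Y|\le n$ for every $Y\in W(A)$; (ii) $A$ is sparse if and only if every $Y\in W(A)$ is finite; (iii) $A$ is scattered if and only if for every subset $B\subseteq A$ there exists a finite subset $Y$ of $G$ lying in the closure (in $\mathcal{P}_G$) of $\{Bb^{-1}: b\in B\}$.
   Context: Identify $\mathcal{P}_G$ with $\{0,1\}^G$ with the product topology, a $G$-space under $(A,g)\mapsto Ag$. For $X\in\mathcal{P}_G$: $[U]_X=\{g: Xg\in U\}$, $T(X)$ is the closure of $\{Xg:g\in G\}$, and $W(X)=\{Y\in T(X): [U]_X$ infinite for every neighbourhood $U$ of $Y\}$. $A$ is $n$-thin if for all distinct $g_0,\dots,g_n\in G$ the set $g_0A\cap\dots\cap g_nA$ is finite. $A$ is sparse if for every infinite $X\subseteq G$ there is finite $F\subseteq X$ with $\bigcap_{g\in F}gA$ finite. Identify $\beta G$ with the set of ultrafilters on $G$ with its usual semigroup extension of the multiplication ($gp=\{gP:P\in p\}$); $G^*$ is the set of free ultrafilters and for $X\subseteq G$, $X^*=\{p\in G^*: X\in p\}$. For $p\in G^*$, $\Delta_p(X)=X^*\cap Gp=\{gp: g\in G, X\in gp\}$. $A$ is scattered if for every infinite $X\subseteq A$ there is $p\in X^*$ with $\Delta_p(X)$ finite. *)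

From Stdlib Require Import List Arith.
Import ListNotations.
Set Implicit Arguments.

Record group := Group {
  carrier :> Type;
  mul : carrier -> carrier -> carrier;
  one : carrier;
  inv : carrier -> carrier;
  mulA : forall x y z, mul x (mul y z) = mul (mul x y) z;
  mul1g : forall x, mul one x = x;
  mulg1 : forall x, mul x one = x;
  mulVg : forall x, mul (inv x) x = one;
  mulgV : forall x, mul x (inv x) = one
}.

Section Defs.
Variable G : group.
Local Notation "x * y" := (mul G x y).

(* subsets of G, i.e. points of P_G = {0,1}^G *)
Definition subset := G -> Prop.

Definition finite {T : Type} (S : T -> Prop) : Prop :=
  exists l : list T, forall x, S x -> In x l.
Definition infinite {T : Type} (S : T -> Prop) : Prop := ~ finite S.

Definition card_le {T : Type} (S : T -> Prop) (n : nat) : Prop :=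
  exists l : list T, length l <= n /\ forall x, S x -> In x l.

Definition ltrans (g : G) (A : subset) : subset := fun x => exists a, A a /\ x = g * a.
Definition rtrans (A : subset) (g : G) : subset := fun x => exists a, A a /\ x = a * g.

(* product topology on {0,1}^G: U is a neighbourhood of Y iff it contains a
   basic open set {Z : Z and Y agree on a finite set F}. *)
Definition nbhd (Y : subset) (U : subset -> Prop) : Prop :=
  exists F : list G, forall Z : subset, (forall x, In x F -> (Z x <-> Y x)) -> U Z.

Definition closure (S : subset -> Prop) (Y : subset) : Prop :=
  forall U, nbhd Y U -> exists Z, S Z /\ U Z.

Definition hit (U : subset -> Prop) (X : subset) : subset := fun g => U (rtrans X g).

Definition Tcl (X : subset) : subset -> Prop :=
  closure (fun Z => exists g, Z = rtrans X g).

Definition W (X : subset) : subset -> Prop :=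
  fun Y => Tcl X Y /\ forall U, nbhd Y U -> infinite (hit U X).

Definition thin (n : nat) (A : subset) : Prop :=
  forall l : list G, NoDup l -> length l = S n ->
    finite (fun x => forall g, In g l -> ltrans g A x).

Definition sparse (A : subset) : Prop :=
  forall X : subset, infinite X ->
    exists F : list G, (forall g, In g F -> X g) /\
      finite (fun x => forall g, In g F -> ltrans g A x).

Definition ultrafilter (p : subset -> Prop) : Prop :=
  p (fun _ => True) /\ ~ p (fun _ => False) /\
  (forall P Q : subset, p P -> (forall x, P x -> Q x) -> p Q) /\
  (forall P Q : subset, p P -> p Q -> p (fun x => P x /\ Q x)) /\
  (forall P : subset, p P \/ p (fun x => ~ P x)).

Definition free_ultrafilter (p : subset -> Prop) : Prop :=
  ultrafilter p /\ forall P : subset, p P -> infinite P.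

(* gp = {gP : P in p}; Q in gp iff g^{-1}Q = {y : g y in Q} in p *)
Definition ult_lmul (g : G) (p : subset -> Prop) : subset -> Prop :=
  fun Q => p (fun y => Q (g * y)).

(* Delta_p(X) = X^* \cap Gp = {gp : g in G, X in gp} *)
Definition Delta (p : subset -> Prop) (X : subset) : (subset -> Prop) -> Prop :=
  fun q => exists g, q = ult_lmul g p /\ ult_lmul g p X.

Definition scattered (A : subset) : Prop :=
  forall X : subset, (forall x, X x -> A x) -> infinite X ->
    exists p, free_ultrafilter p /\ p X /\ finite (Delta p X).

End Defs.

From Stdlib Require Import List Lia Classical ClassicalEpsilon FinFun.
From mathcomp Require classical_sets filter.
Import ListNotations.
Set Implicit Arguments.
Unset Strict Implicit.

(* For an ultrafilter p on G let Y_p(B) = {y : {x : B (y x)} ∈ p}, written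
   [ultralim p B] below; it is the p-limit of the translates B x^{-1} in P_G.
   If p is free then Y_p(A) ∈ W(A), and y_1, ..., y_k ∈ Y_p(A) means exactly
   that y_1^{-1}A ∩ ... ∩ y_k^{-1}A ∈ p.  Conversely, if Y ∈ W(A) and
   y_1, ..., y_k ∈ Y then y_1^{-1}A ∩ ... ∩ y_k^{-1}A is infinite.  So (i) and
   (ii) reduce to choosing free ultrafilters containing suitable intersections
   of translates of A.  For (iii), y ↦ yp is a bijection from Y_p(B) onto
   Δ_p(B) because G acts freely on βG, and Y_p(B) lies in the closure of
   {B b^{-1} : b ∈ B} when B ∈ p; conversely a finite point Y of that closure
   yields a free p ∋ B such that gp ∋ B forces g ∈ Y. *)

Lemma finite_subset {T : Type} (P S : T -> Prop) :
  finite S -> (forall x, P x -> S x) -> finite P.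
Proof. intros [l Hl] HPS. exists l. auto. Qed.

Lemma finite_preimage {T U : Type} (f : T -> U) (P : T -> Prop) (S : U -> Prop) :
  Injective f -> finite S -> (forall x, P x -> S (f x)) -> finite P.
Proof.
  intros Hf [l Hl] HPS. assert (HPl : forall x, P x -> In (f x) l) by auto.
  clear S Hl HPS. revert P HPl. induction l as [|u l IH]; intros P HPl.
  - exists []. intros x Px. destruct (HPl x Px).
  - destruct (classic (exists x0, P x0 /\ f x0 = u)) as [[x0 [Px0 Hx0]]|Hu].
    + destruct (IH (fun x => P x /\ x <> x0)) as [l0 Hl0].
      { intros x [Px Hx]. destruct (HPl x Px) as [E|E]; auto.
        exfalso. apply Hx, Hf. congruence. }
      exists (x0 :: l0). intros x Px.
      destruct (classic (x = x0)) as [->|Hx]; simpl; auto.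
    + apply IH. intros x Px. destruct (HPl x Px) as [E|E]; auto.
      exfalso. apply Hu. eauto.
Qed.

Lemma card_le_NoDup {T : Type} (Y : T -> Prop) n l :
  card_le Y n -> NoDup l -> (forall y, In y l -> Y y) -> length l <= n.
Proof.
  intros [m [Hm HYm]] Hl HlY.
  enough (length l <= length m) by lia.
  apply NoDup_incl_length; [exact Hl | intros y Hy; apply HYm, HlY, Hy].
Qed.

Lemma not_card_le {T : Type} (Y : T -> Prop) n : ~ card_le Y n ->
  exists l, NoDup l /\ length l = S n /\ forall y, In y l -> Y y.
Proof.
  intro HY.
  enough (H : forall k, k <= S n ->
    exists l, NoDup l /\ length l = k /\ forall y, In y l -> Y y) by auto.
  induction k as [|k IH]; intros Hk.
  - exists []. repeat split; [constructor | intros y []].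
  - destruct IH as [l [Hl [Hlen HlY]]]; [lia|].
    destruct (classic (exists y, Y y /\ ~ In y l)) as [[y [Hy Hyl]]|Hfull].
    + exists (y :: l). repeat split; simpl; auto.
      * constructor; auto.
      * intros z [<-|Hz]; auto.
    + exfalso. apply HY. exists l. split; [lia|].
      intros x Hx. apply NNPP. intro Hxl. apply Hfull. eauto.
Qed.

Section Ultrafilters.
Variable G : group.
Implicit Types (p : subset G -> Prop) (P Q : subset G).

Lemma ufT p : ultrafilter p -> p (fun _ => True).
Proof. intros [H _]; exact H. Qed.

Lemma ufS p P Q : ultrafilter p -> p P -> (forall x, P x -> Q x) -> p Q.
Proof. intros (_ & _ & H & _); eauto. Qed.

Lemma ufI p P Q : ultrafilter p -> p P -> p Q -> p (fun x => P x /\ Q x).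
Proof. intros (_ & _ & _ & H & _); auto. Qed.

Lemma ufC p P : ultrafilter p -> ~ p P -> p (fun x => ~ P x).
Proof. intros (_ & _ & _ & _ & H) HP. destruct (H P); tauto. Qed.

Lemma uf_ex p P : ultrafilter p -> p P -> exists x, P x.
Proof.
  intros Hp HP. apply NNPP. intro Hn. apply (proj1 (proj2 Hp)).
  apply (ufS Hp HP). intros x Px. apply Hn. eauto.
Qed.

Lemma uf_disjoint p P Q : ultrafilter p -> p P -> p Q ->
  (forall x, P x -> Q x -> False) -> False.
Proof.
  intros Hp HP HQ HPQ. destruct (uf_ex Hp (ufI Hp HP HQ)) as [x [Px Qx]].
  exact (HPQ x Px Qx).
Qed.

Lemma uf_or p P Q : ultrafilter p -> p (fun x => P x \/ Q x) -> p P \/ p Q.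
Proof.
  intros Hp H. apply NNPP. intro Hn. apply not_or_and in Hn as [HP HQ].
  apply (uf_disjoint Hp H (ufI Hp (ufC Hp HP) (ufC Hp HQ))).
  intros x [] []; auto.
Qed.

Lemma ultrafilter_UltraFilter p : filter.UltraFilter p -> ultrafilter p.
Proof.
  intro Hp. split; [|split; [|split; [|split]]].
  - exact filter.filterT.
  - exact (filter.filter_not_empty p).
  - intros P Q HP HPQ. exact (filter.filterS HPQ HP).
  - intros P Q HP HQ. exact (filter.filterI HP HQ).
  - intro P. exact (filter.in_ultra_setVsetC P Hp).
Qed.

(* Generating the filter by the sets B i minus finite sets makes its
   ultrafilter extensions free. *)
Lemma ex_free_ultrafilter {I : Type} (D : I -> Prop) (B : I -> subset G) :
  (exists i, D i) ->
  (forall i j, D i -> D j -> exists k, D k /\ forall x, B k x -> B i x /\ B j x) ->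
  (forall i, D i -> infinite (B i)) ->
  exists p, free_ultrafilter p /\ forall i, D i -> p (B i).
Proof.
  intros [i0 Di0] Hdir Hinf.
  pose (D' := fun il : I * list G => D (fst il)).
  pose (B' := fun (il : I * list G) x => B (fst il) x /\ ~ In x (snd il)).
  assert (Hproper : filter.ProperFilter (filter.filter_from D' B')).
  { apply filter.filter_from_proper.
    - apply filter.filter_from_filter; [exists (i0, []); exact Di0|].
      intros [i l] [j m] Di Dj. destruct (Hdir i j Di Dj) as [k [Dk Hk]].
      exists (k, l ++ m); [exact Dk|]. intros x [Bx Hx].
      destruct (Hk x Bx). split; split; auto; intro; apply Hx, in_or_app; auto.
    - intros [i l] Di. apply NNPP. intro Hn. apply (Hinf i Di). exists l.
      intros x Bx. apply NNPP. intro Hx. apply Hn. exists x. split; auto. }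
  destruct (filter.ultraFilterLemma Hproper) as [p [Hp Hsub]].
  pose proof (ultrafilter_UltraFilter Hp) as Hu.
  assert (HB' : forall i l, D i -> p (B' (i, l))).
  { intros i l Di. apply Hsub. exists (i, l); [exact Di | intros x Hx; exact Hx]. }
  exists p. split; [split; [exact Hu|] |].
  - intros P HP [l Hl]. apply (uf_disjoint Hu HP (HB' i0 l Di0)).
    intros x Px [_ Hx]. exact (Hx (Hl x Px)).
  - intros i Di. apply (ufS Hu (HB' i [] Di)). intros x [Bx _]. exact Bx.
Qed.

End Ultrafilters.

Section Translates.
Variable G : group.
Local Notation "x * y" := (mul G x y).
Local Notation inv := (inv G).
Local Notation one := (one G).
Implicit Types (p : subset G -> Prop) (A B C X Y : subset G).

Lemma mulKg g a : inv g * (g * a) = a.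
Proof. rewrite mulA, mulVg, mul1g; reflexivity. Qed.

Lemma mulKVg g a : g * (inv g * a) = a.
Proof. rewrite mulA, mulgV, mul1g; reflexivity. Qed.

Lemma mulgK a g : a * g * inv g = a.
Proof. rewrite <- mulA, mulgV, mulg1; reflexivity. Qed.

Lemma mulgKV a g : a * inv g * g = a.
Proof. rewrite <- mulA, mulVg, mulg1; reflexivity. Qed.

Lemma invgK g : inv (inv g) = g.
Proof. rewrite <- (mulg1 G (inv (inv g))), <- (mulVg G g), mulKg; reflexivity. Qed.

Lemma invg_inj : Injective inv.
Proof. intros x y E. rewrite <- (invgK x), <- (invgK y), E; reflexivity. Qed.

Lemma mulIg g : Injective (fun x => x * g).
Proof. intros x y E. rewrite <- (mulgK x g), <- (mulgK y g), E; reflexivity. Qed.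

Lemma ltransE g A x : ltrans g A x <-> A (inv g * x).
Proof.
  split.
  - intros [a [Ha ->]]. rewrite mulKg; exact Ha.
  - intro H. exists (inv g * x). split; [exact H | symmetry; apply mulKVg].
Qed.

Lemma rtrans_inv B b x : rtrans B (inv b) x <-> B (x * b).
Proof.
  split.
  - intros [a [Ha ->]]. rewrite mulgKV; exact Ha.
  - intro H. exists (x * b). split; [exact H | symmetry; apply mulgK].
Qed.

(* Katětov's three-set argument: a maximal C with C ∩ k^{-1}C = ∅ covers G
   by C, k^{-1}C and kC, and none of these can lie in an ultrafilter p with
   p ⊆ kp. *)
Lemma ult_lmul_free p k : ultrafilter p ->
  (forall Q, p Q -> ult_lmul k p Q) -> k = one.
Proof.
  intros Hp Hk. apply NNPP. intro Hk1.
  pose (sep := fun C : subset G => forall y, C y -> C (k * y) -> False).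
  assert (Hsep : forall Q, sep Q -> ~ p Q).
  { intros Q HQ HpQ. exact (uf_disjoint Hp HpQ (Hk Q HpQ) HQ). }
  destruct (@classical_sets.Zorn_bigcup G sep) as [C [HC Cmax]].
  { intros F HF Htot y [X FX Xy] [X' FX' X'y].
    destruct (Htot X X' FX FX') as [E|E].
    - exact (HF X' FX' y (E y Xy) X'y).
    - exact (HF X FX y Xy (E _ X'y)). }
  assert (Hcover : forall y, C y \/ C (k * y) \/ C (inv k * y)).
  { intro y. apply NNPP. intro Hn. apply (Cmax (fun z => C z \/ z = y)).
    - split; [intros z Cz; left; exact Cz|].
      intro Hsub. apply Hn. left. exact (Hsub y (or_intror eq_refl)).
    - intros z [Cz| ->] [Ckz|Ekz].
      + exact (HC z Cz Ckz).
      + apply Hn. right; right. rewrite <- Ekz, mulKg. exact Cz.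
      + apply Hn. right; left. exact Ckz.
      + apply Hk1. rewrite <- (mulgK k y), Ekz. apply mulgV. }
  assert (Hsep1 : sep (fun y => C (k * y))).
  { intros y H1 H2. exact (HC (k * y) H1 H2). }
  assert (Hsep2 : sep (fun y => C (inv k * y))).
  { intros y H1 H2. rewrite mulKg in H2. apply (HC _ H1). rewrite mulKVg. exact H2. }
  assert (Hpcover : p (fun y => C y \/ C (k * y) \/ C (inv k * y))).
  { apply (ufS Hp (ufT Hp)). intros y _. apply Hcover. }
  destruct (uf_or Hp Hpcover) as [H|H]; [exact (Hsep C HC H)|].
  destruct (uf_or Hp H) as [H'|H']; [exact (Hsep _ Hsep1 H') | exact (Hsep _ Hsep2 H')].
Qed.

Lemma ult_lmul_inj p f f' : ultrafilter p -> ult_lmul f p = ult_lmul f' p -> f = f'.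
Proof.
  intros Hp E.
  assert (Hk : inv f' * f = one).
  { apply (ult_lmul_free Hp). intros Q HQ.
    assert (H : ult_lmul f' p (fun z => Q (inv f' * z))).
    { apply (ufS Hp HQ). intros y Qy. cbn. rewrite mulKg. exact Qy. }
    rewrite <- E in H. apply (ufS Hp H).
    intros y Qy. cbn in *. rewrite <- mulA. exact Qy. }
  rewrite <- (mulKVg f' f), Hk, mulg1. reflexivity.
Qed.

Definition ultralim p B : subset G := fun y => p (fun x => B (y * x)).

Lemma ultralim_agree p B F : ultrafilter p ->
  p (fun x => forall f, In f F -> (B (f * x) <-> ultralim p B f)).
Proof.
  intro Hp. induction F as [|f F IH].
  - apply (ufS Hp (ufT Hp)). intros x _ f [].
  - destruct (classic (ultralim p B f)) as [Hf|Hf].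
    + apply (ufS Hp (ufI Hp Hf IH)). intros x [Hx HF] g [<-|Hg]; auto. tauto.
    + apply (ufS Hp (ufI Hp (ufC Hp Hf) IH)). intros x [Hx HF] g [<-|Hg]; auto. tauto.
Qed.

Lemma ultralim_closure p B C : ultrafilter p -> p C ->
  closure (fun Z => exists c, C c /\ Z = rtrans B (inv c)) (ultralim p B).
Proof.
  intros Hp HC U [F HF].
  destruct (uf_ex Hp (ufI Hp HC (ultralim_agree B F Hp))) as [x [Cx Hx]].
  exists (rtrans B (inv x)). split; [eauto|].
  apply HF. intros f Hf. rewrite rtrans_inv. exact (Hx f Hf).
Qed.

Lemma W_ultralim p A : free_ultrafilter p -> W A (ultralim p A).
Proof.
  intros [Hp Hfree]. split.
  - intros U HU.
    destruct (ultralim_closure Hp (ufT Hp) HU) as [Z [[c [_ ->]] HZ]].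
    exists (rtrans A (inv c)). eauto.
  - intros U [F HF] Hfin. apply (Hfree _ (ultralim_agree A F Hp)).
    apply (finite_preimage invg_inj Hfin).
    intros x Hx. apply HF. intros f Hf. rewrite rtrans_inv. exact (Hx f Hf).
Qed.

Lemma W_inter_infinite A Y l : W A Y -> (forall y, In y l -> Y y) ->
  infinite (fun x => forall y, In y l -> A (y * x)).
Proof.
  intros [_ HW] HlY Hfin.
  apply (HW (fun Z => forall y, In y l -> Z y)).
  { exists l. intros Z HZ y Hy. apply HZ; auto. }
  apply (finite_preimage invg_inj Hfin). intros g Hg y Hy.
  destruct (Hg y Hy) as [a [Ha E]]. rewrite E, mulgK. exact Ha.
Qed.

Lemma thin_iff_W_card_le n A : thin n A <-> forall Y, W A Y -> card_le Y n.
Proof.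
  split.
  - intros Hthin Y HW. apply NNPP. intro HY.
    destruct (not_card_le HY) as [l [Hl [Hlen HlY]]].
    apply (W_inter_infinite HW HlY).
    refine (finite_subset (Hthin (map inv l) _ _) _).
    + apply (Injective_map_NoDup invg_inj Hl).
    + rewrite length_map. exact Hlen.
    + intros x Hx g Hg. apply in_map_iff in Hg as [y [<- Hy]].
      rewrite ltransE, invgK. exact (Hx y Hy).
  - intros HW l Hl Hlen. apply NNPP. intro Hinf.
    destruct (@ex_free_ultrafilter G unit (fun _ => True)
                (fun _ x => forall g, In g l -> ltrans g A x)) as [p [Hfp Hp]];
      [exists tt; exact I | intros; exists tt; auto | auto |].
    enough (length (map inv l) <= n) by (rewrite length_map in *; lia).
    apply (card_le_NoDup (HW _ (W_ultralim A Hfp))).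
    + apply (Injective_map_NoDup invg_inj Hl).
    + intros y Hy. apply in_map_iff in Hy as [g [<- Hg]].
      apply (ufS (proj1 Hfp) (Hp tt I)). intros x Hx. apply ltransE, Hx, Hg.
Qed.

Lemma sparse_iff_W_finite A : sparse A <-> forall Y, W A Y -> finite Y.
Proof.
  split.
  - intros Hsp Y HW. apply NNPP. intro HY.
    destruct (Hsp (fun x => Y (inv x))) as [F [HF Hfin]].
    { intro Hfin. apply HY. apply (finite_preimage invg_inj Hfin).
      intros y Hy. rewrite invgK. exact Hy. }
    apply (W_inter_infinite (l := map inv F) HW).
    { intros y Hy. apply in_map_iff in Hy as [g [<- Hg]]. exact (HF g Hg). }
    apply (finite_subset Hfin). intros x Hx g Hg.
    apply ltransE, Hx, in_map, Hg.
  - intros HW X HX. apply NNPP. intro Hn.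
    destruct (@ex_free_ultrafilter G (list G) (fun F => forall g, In g F -> X g)
                (fun F x => forall g, In g F -> ltrans g A x)) as [p [Hfp Hp]].
    + exists []. intros g [].
    + intros F F' HF HF'. exists (F ++ F').
      split; [intros g Hg; apply in_app_or in Hg as [Hg|Hg]; auto|].
      intros x Hx. split; intros g Hg; apply Hx, in_or_app; auto.
    + intros F HF Hfin. apply Hn. exists F. split; assumption.
    + apply HX. apply (finite_preimage invg_inj (HW _ (W_ultralim A Hfp))).
      intros g Hg.
      assert (Hg' : forall h, In h [g] -> X h) by (intros h [<-|[]]; exact Hg).
      apply (ufS (proj1 Hfp) (Hp [g] Hg')).
      intros x Hx. apply ltransE, Hx. left; reflexivity.
Qed.

Definition inv_translates B : subset G -> Prop :=
  fun Z => exists b, B b /\ Z = rtrans B (inv b).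

Lemma closure_inv_translates_agree_infinite X Y F : infinite X -> finite Y ->
  closure (inv_translates X) Y ->
  infinite (fun b => X b /\ forall f, In f F -> (X (f * b) <-> Y f)).
Proof.
  intros HX HY Hcl [lb Hlb].
  assert (Hout : forall b, exists f, X (f * b) /\ ~ Y f).
  { intro b. apply NNPP. intro Hn. apply HX.
    apply (finite_preimage (mulIg (g := inv b)) HY). intros x Hx.
    apply NNPP. intro Hy. apply Hn. exists (x * inv b). rewrite mulgKV. auto. }
  destruct (choice _ Hout) as [out Hout'].
  destruct (Hcl (fun Z => forall f, In f (F ++ map out lb) -> (Z f <-> Y f)))
    as [Z [[b [Hb ->]] HZ]]; [exists (F ++ map out lb); auto|].
  assert (Hblb : In b lb).
  { apply Hlb. split; [exact Hb|]. intros f Hf.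
    rewrite <- rtrans_inv. apply HZ, in_or_app; auto. }
  destruct (Hout' b) as [Hxb Hyb]. apply Hyb, HZ.
  - apply in_or_app. right. apply in_map, Hblb.
  - apply rtrans_inv, Hxb.
Qed.

Lemma scattered_finite_cluster A B : scattered A ->
  (forall x, B x -> A x) -> (exists b, B b) ->
  exists Y, finite Y /\ closure (inv_translates B) Y.
Proof.
  intros Hsc HBA [b Hb]. destruct (classic (finite B)) as [HB|HB].
  - exists (rtrans B (inv b)). split.
    + apply (finite_preimage (mulIg (g := b)) HB). intros x Hx. apply rtrans_inv, Hx.
    + intros U [F HF]. exists (rtrans B (inv b)). split; [exists b; auto|].
      apply HF. tauto.
  - destruct (Hsc B HBA HB) as [p [[Hp _] [HpB HD]]].
    exists (ultralim p B). split; [|exact (ultralim_closure (B := B) Hp HpB)].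
    apply (finite_preimage (f := fun g => ult_lmul g p)
             (fun f f' => ult_lmul_inj Hp) HD).
    intros g Hg. exists g. split; [reflexivity | exact Hg].
Qed.

Lemma finite_cluster_scattered A :
  (forall B, (forall x, B x -> A x) -> (exists b, B b) ->
     exists Y, finite Y /\ closure (inv_translates B) Y) ->
  scattered A.
Proof.
  intros H X HXA HX.
  assert (Hne : exists b, X b).
  { apply NNPP. intro Hn. apply HX. exists []. intros x Hx. apply Hn. eauto. }
  destruct (H X HXA Hne) as [Y [[lY HlY] Hcl]].
  destruct (@ex_free_ultrafilter G (list G) (fun _ => True)
              (fun F b => X b /\ forall f, In f F -> (X (f * b) <-> Y f)))
    as [p [Hfp Hp]].
  - exists []. exact I.
  - intros F F' _ _. exists (F ++ F'). split; [exact I|].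
    intros x [Hx HFF'].
    split; (split; [exact Hx|]); intros f Hf; apply HFF', in_or_app; auto.
  - intros F _. apply closure_inv_translates_agree_infinite; auto.
    exists lY. exact HlY.
  - pose proof (proj1 Hfp) as Hu. exists p. split; [exact Hfp|]. split.
    + apply (ufS Hu (Hp [] I)). intros x [Hx _]. exact Hx.
    + exists (map (fun g => ult_lmul g p) lY). intros q [g [-> Hg]].
      apply (in_map (fun h => ult_lmul h p)), HlY, NNPP. intro Hy.
      apply (uf_disjoint Hu Hg (Hp [g] I)). intros x Hgx [_ Hagree].
      apply Hy, (Hagree g (or_introl eq_refl)), Hgx.
Qed.

End Translates.

Theorem theorem4p2 (G : group) (HG : infinite (fun _ : G => True)) (A : subset G) :
  (forall n : nat, thin n A <-> (forall Y, W A Y -> card_le Y n)) /\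
  (sparse A <-> (forall Y, W A Y -> finite Y)) /\
  (scattered A <->
     (forall B : subset G, (forall x, B x -> A x) -> (exists b, B b) ->
        exists Y : subset G, finite Y /\
          closure (fun Z => exists b, B b /\ Z = rtrans B (inv G b)) Y)).
Proof.
  split; [|split].
  - intro n. apply thin_iff_W_card_le.
  - apply sparse_iff_W_finite.
  - split.
    + intros Hsc B. exact (scattered_finite_cluster Hsc).
    + apply finite_cluster_scattered.
Qed.
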